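(* Fix revenues $r_i\in[0,1]$ ($i=1,\dots,N$) and penalty $c\in[0,1]$. Let $\mathbf{v},\mathbf{w}\in[0,1]^N$ and $q_v,q_w\in[0,1]$, and let $\mathbf{S}_v^*\in\arg\max_{\mathbf{S}}\mathbb{E}[U(\mathbf{S};\mathbf{v},q_v)]$. Then $$\big|\mathbb{E}[U(\mathbf{S}_v^*;\mathbf{v},q_v)]-\mathbb{E}[U(\mathbf{S}_v^*;\mathbf{w},q_w)]\big|\le\sum_{i\in\mathbf{S}_v^*}\big(2|v_i-w_i|+(N+1)|q_v-q_w|\big).$$
   Context: A sequence $\mathbf{S}=(S_1,\dots,S_m)$ consists of distinct items from $\{1,\dots,N\}$; $I(k)$ denotes the item at position $k$, and the maximum is over all such sequences. For $\mathbf{u}\in[0,1]^N$ and $q\in[0,1]$, $$\mathbb{E}[U(\mathbf{S};\mathbf{u},q)]=\sum_{l=1}^{m} r_{I(l)}u_{I(l)}\,q^{l-1}\prod_{k=1}^{l-1}(1-u_{I(k)})\;-\;c\sum_{k=1}^{m}q^{k-1}(1-q)\prod_{j=1}^{k}(1-u_{I(j)}).$$ (This is the expected payoff when a user scans the sequence, selects item $i$ with probability $u_i$ earning $r_i$, and otherwise abandons with probability $1-q$ at penalty $c$ or continues with probability $q$.) *)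

From mathcomp Require Import all_boot all_order all_algebra.
Set Implicit Arguments. Unset Strict Implicit. Unset Printing Implicit Defensive.
Import Order.TTheory GRing.Theory Num.Theory.
Local Open Scope ring_scope.

(* Items are natural numbers; a sequence S of distinct items from {1..N}
   is encoded (0-based) as S : seq nat with uniq S and all items < N.
   Positions are 0-based: I(l+1) = nth 0%N S l. *)
Definition valid_seq (N : nat) (S : seq nat) : bool :=
  uniq S && all (fun i => (i < N)%N) S.

Definition EU {R : realFieldType} (r : nat -> R) (c : R)
  (S : seq nat) (u : nat -> R) (q : R) : R :=
  \sum_(l < size S)
     r (nth 0%N S l) * u (nth 0%N S l) * q ^+ l
       * \prod_(k < l) (1 - u (nth 0%N S k))
  - c * \sum_(k < size S)
          q ^+ k * (1 - q) * \prod_(j < k.+1) (1 - u (nth 0%N S j)).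

From mathcomp Require Import all_boot all_order all_algebra ring lra.
Set Implicit Arguments. Unset Strict Implicit. Unset Printing Implicit Defensive.
Import Order.TTheory GRing.Theory Num.Theory.
Local Open Scope ring_scope.

(* Scanning item [i] first, the user picks it with probability [u i] (earning
   [r i]), and otherwise either continues with probability [q] (earning the
   value of the rest of the sequence) or abandons, paying [c].  So the expected
   payoff obeys a recursion by nested convex combinations of quantities in
   [-1, 1]; it stays in [-1, 1], and a convex combination of such quantities
   moves by at most 2|t - t'| when its weight t moves.  Each item therefore
   contributes at most 2|v_i - w_i| + 2|q_v - q_w| to the difference, and
   2 <= N + 1 because a nonempty sequence forces N >= 1. *)

Section ConvexCombination.
Variable R : realFieldType.
Implicit Types t x y : R.

Definition mix t x y : R := t * x + (1 - t) * y.

Lemma normr_le1_unit x : 0 <= x <= 1 -> `|x| <= 1.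
Proof. by move=> /andP[x0 x1]; rewrite ger0_norm. Qed.

Lemma normr_mix_le1 t x y :
  0 <= t <= 1 -> `|x| <= 1 -> `|y| <= 1 -> `|mix t x y| <= 1.
Proof.
move=> /andP[t0 t1] x1 y1; apply: le_trans (ler_normD _ _) _.
have t'0 : 0 <= 1 - t by rewrite subr_ge0.
rewrite !normrM (ger0_norm t0) (ger0_norm t'0).
have : t * `|x| <= t by rewrite ler_piMr.
have : (1 - t) * `|y| <= 1 - t by rewrite ler_piMr.
lra.
Qed.

Lemma normr_mix_sub t x y t' x' y' :
  0 <= t <= 1 -> `|x'| <= 1 -> `|y'| <= 1 ->
  `|mix t x y - mix t' x' y'| <= `|x - x'| + `|y - y'| + 2 * `|t - t'|.
Proof.
move=> /andP[t0 t1] x'1 y'1.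
have -> : mix t x y - mix t' x' y' = t * (x - x') + (1 - t) * (y - y') + (t - t') * (x' - y').
  by rewrite /mix; ring.
have dx : `|t * (x - x')| <= `|x - x'|.
  by rewrite normrM ger0_norm // ler_piMl.
have dy : `|(1 - t) * (y - y')| <= `|y - y'|.
  by rewrite normrM ger0_norm ?subr_ge0 // ler_piMl // lerBlDr lerDl.
have dt : `|(t - t') * (x' - y')| <= 2 * `|t - t'|.
  rewrite normrM mulrC ler_wpM2r //; apply: le_trans (ler_normB _ _) _; lra.
apply: le_trans (ler_normD _ _) _; apply: lerD dt.
by apply: le_trans (ler_normD _ _) _; apply: lerD.
Qed.

End ConvexCombination.

Section ExpectedPayoff.
Variables (R : realFieldType) (r : nat -> R) (c : R).
Hypothesis c01 : 0 <= c <= 1.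

Lemma EU_nil u q : EU r c [::] u q = 0.
Proof. by rewrite /EU !big_ord0 mulr0 subr0. Qed.

Definition reach_prob u q S l : R := q ^+ l * \prod_(k < l) (1 - u (nth 0%N S k)).

Lemma EU_reach_prob S u q :
  EU r c S u q = \sum_(l < size S)
    (r (nth 0%N S l) * u (nth 0%N S l) - c * (1 - q) * (1 - u (nth 0%N S l)))
      * reach_prob u q S l.
Proof.
rewrite /EU mulr_sumr -sumrB; apply: eq_bigr => l _.
by rewrite big_ord_recr /reach_prob /=; ring.
Qed.

Lemma reach_prob_cons u q i S l :
  reach_prob u q (i :: S) l.+1 = q * (1 - u i) * reach_prob u q S l.
Proof. by rewrite /reach_prob big_ord_recl exprS /=; ring. Qed.

Lemma EU_cons i S u q :
  EU r c (i :: S) u q = mix (u i) (r i) (mix q (EU r c S u q) (- c)).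
Proof.
rewrite !EU_reach_prob big_ord_recl /=.
under eq_bigr => l _ do rewrite /bump /= add1n reach_prob_cons mulrCA.
rewrite -mulr_sumr /reach_prob /mix expr0 big_ord0; ring.
Qed.

Lemma normr_EU_le1 S u q :
  {in S, forall i, 0 <= r i <= 1} -> {in S, forall i, 0 <= u i <= 1} ->
  0 <= q <= 1 -> `|EU r c S u q| <= 1.
Proof.
move=> + + q01; elim: S => [|i S IH]; first by rewrite EU_nil normr0.
move=> /forall_cons[ri r01] /forall_cons[ui u01].
have c1 : `|- c| <= 1 by rewrite normrN normr_le1_unit.
rewrite EU_cons; apply: normr_mix_le1 => //; first exact: normr_le1_unit.
by apply: normr_mix_le1 => //; exact: IH.
Qed.

Lemma EU_sub_le S v w qv qw :
  {in S, forall i, 0 <= r i <= 1} ->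
  {in S, forall i, 0 <= v i <= 1} -> {in S, forall i, 0 <= w i <= 1} ->
  0 <= qv <= 1 -> 0 <= qw <= 1 ->
  `|EU r c S v qv - EU r c S w qw|
    <= \sum_(i <- S) (2 * `|v i - w i| + 2 * `|qv - qw|).
Proof.
move=> + + + qv01 qw01.
elim: S => [|i S IH]; first by rewrite !EU_nil subrr normr0 big_nil.
move=> /forall_cons[ri r01] /forall_cons[vi v01] /forall_cons[wi w01].
have c1 : `|- c| <= 1 by rewrite normrN normr_le1_unit.
have tail_bound : `|mix qv (EU r c S v qv) (- c) - mix qw (EU r c S w qw) (- c)|
    <= `|EU r c S v qv - EU r c S w qw| + 2 * `|qv - qw|.
  apply: le_trans (normr_mix_sub _ _ _ _ _ _) _ => //; first exact: normr_EU_le1.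
  by rewrite subrr normr0 addr0.
rewrite !EU_cons big_cons.
apply: le_trans (normr_mix_sub _ _ _ _ _ _) _ => //.
- exact: normr_le1_unit.
- by apply: normr_mix_le1 => //; exact: normr_EU_le1.
- by rewrite subrr normr0 add0r; have := IH r01 v01 w01; lra.
Qed.

End ExpectedPayoff.

Theorem lemma4 (R : realFieldType) (N : nat) (r : nat -> R) (c : R)
  (v w : nat -> R) (qv qw : R) (Sv : seq nat) :
  (forall i, (i < N)%N -> 0 <= r i <= 1) ->
  0 <= c <= 1 ->
  (forall i, (i < N)%N -> 0 <= v i <= 1) ->
  (forall i, (i < N)%N -> 0 <= w i <= 1) ->
  0 <= qv <= 1 -> 0 <= qw <= 1 ->
  valid_seq N Sv ->
  (forall S, valid_seq N S -> EU r c S v qv <= EU r c Sv v qv) ->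
  `| EU r c Sv v qv - EU r c Sv w qw |
    <= \sum_(i <- Sv) (2 * `|v i - w i| + (N.+1)%:R * `|qv - qw|).
Proof.
move=> r01 c01 v01 w01 qv01 qw01 /andP[_ /allP SvN] _.
have inSv P : (forall i, (i < N)%N -> P i) -> {in Sv, forall i, P i}.
  by move=> HP i /SvN; exact: HP.
apply: le_trans (EU_sub_le c01 (inSv _ r01) (inSv _ v01) (inSv _ w01) qv01 qw01) _.
rewrite big_seq_cond [leRHS]big_seq_cond; apply: ler_sum => i /andP[/SvN iN _].
rewrite lerD2l ler_wpM2r // ler_nat ltnS.
exact: leq_ltn_trans (leq0n i) iN.
Qed.
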